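(* Let $m\ge1$ and consider $Q_{2,m+1}$ with dimension vector $\alpha=(m,1;1,\dots,1)$ ($m+1$ sinks, each of dimension $1$). Then the graded ring of semi-invariants $\bigoplus_{k\ge0}\{f\in\mathbb{C}[\mathrm{Rep}_\alpha Q]: f(g\cdot V)=\chi_\theta(g)^kf(V)\ \forall g\}$ is a polynomial ring in $m+1$ algebraically independent generators of degree $1$; consequently $M^{ss}_\alpha(Q_{2,m+1},\theta)\cong\mathbb{P}^m$.
   Context: $Q_{p,q}$ is the bipartite quiver with $p$ source vertices $v_1,\dots,v_p$, $q$ sink vertices $w_1,\dots,w_q$, and exactly one arrow from each $v_i$ to each $w_j$; a dimension vector is written $\alpha=(a_1,\dots,a_p;b_1,\dots,b_q)$, $\mathrm{Rep}_\alpha Q=\prod_{i,j}\mathrm{Hom}_{\mathbb{C}}(\mathbb{C}^{a_i},\mathbb{C}^{b_j})$, and $\mathrm{GL}_\alpha=\prod_i\mathrm{GL}_{a_i}\times\prod_j\mathrm{GL}_{b_j}$ acts by base change. $\theta=(-1,\dots,-1;1,\dots,1)$, $\chi_\theta(g)=\prod_i\det(g_i)^{-1}\prod_j\det(h_j)$ for $g=(g_1,\dots,g_p;h_1,\dots,h_q)$, and $M^{ss}_\alpha(Q,\theta)=\mathrm{Proj}$ of the graded ring of semi-invariants of weights $\chi_\theta^k$, $k\ge0$ (the moduli space of $\theta$-semistable representations). *)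

From HB Require Import structures.
From mathcomp Require Import all_boot all_order all_algebra.
From mathcomp Require Import reals.
From mathcomp Require Import complex.
From mathcomp Require Import mpoly.
Set Implicit Arguments. Unset Strict Implicit. Unset Printing Implicit Defensive.
Import GRing.Theory.
Local Open Scope ring_scope.

(* The field of complex numbers is modelled as  R[i]  for R : realType
   (every realType is the field of real numbers, so R[i] is C).          *)

(* Quiver Q_{2,m+1}: sources v_1, v_2, sinks w_0..w_m; alpha = (m,1;1,...,1).
   A representation V in Rep_alpha Q is a pair of families
     V1 j : Hom(C^m, C)  = 'M_(1,m)   (arrow v_1 -> w_j)
     V2 j : Hom(C^1, C)  = 'M_(1,1)   (arrow v_2 -> w_j). *)

Section QuiverQ2.
Variable C : fieldType.
Variable m : nat.

Definition rep1 := 'I_m.+1 -> 'M[C]_(1, m).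
Definition rep2 := 'I_m.+1 -> 'M[C]_(1, 1).

Definition ncoord := (m.+1 * (m + 1))%N.

Definition coords (V1 : rep1) (V2 : rep2) : 'I_ncoord -> C :=
  fun k => mxvec (row_mx (\matrix_(j < m.+1, l < m) V1 j 0 l)
                         (\matrix_(j < m.+1, l < 1) V2 j 0 l)) 0 k.

Definition evalRep (f : {mpoly C[ncoord]}) (V1 : rep1) (V2 : rep2) : C :=
  f.@[coords V1 V2].

Definition inGL (g1 : 'M[C]_m) (g2 : 'M[C]_1) (h : 'I_m.+1 -> 'M[C]_1) :=
  [/\ g1 \in unitmx, g2 \in unitmx & forall j, h j \in unitmx].

Definition act1 g1 (h : 'I_m.+1 -> 'M[C]_1) (V1 : rep1) : rep1 :=
  fun j => h j *m V1 j *m invmx g1.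
Definition act2 g2 (h : 'I_m.+1 -> 'M[C]_1) (V2 : rep2) : rep2 :=
  fun j => h j *m V2 j *m invmx g2.

Definition chi_theta (g1 : 'M[C]_m) (g2 : 'M[C]_1) (h : 'I_m.+1 -> 'M[C]_1) : C :=
  (\det g1)^-1 * (\det g2)^-1 * \prod_(j < m.+1) \det (h j).

Definition semi_invariant (k : nat) (f : {mpoly C[ncoord]}) : Prop :=
  forall g1 g2 h, inGL g1 g2 h ->
  forall V1 V2, evalRep f (act1 g1 h V1) (act2 g2 h V2)
                = chi_theta g1 g2 h ^+ k * evalRep f V1 V2.

End QuiverQ2.

From HB Require Import structures.
From mathcomp Require Import all_boot all_order all_algebra.
From mathcomp Require Import reals.
From mathcomp Require Import complex.
From mathcomp Require Import mpoly.
From mathcomp Require Import ring.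
Import GRing.Theory.
Local Open Scope ring_scope.

(* Write Delta_j for the maximal minor of the (m+1) x m block V_1 omitting
   row j.  If all Delta_j are nonzero, a single element of GL_alpha on which
   chi_theta is trivial moves (V_1, V_2) to a normal form whose only free
   coordinates are y_j = V_2(j) Delta_j, and the y_j are themselves
   semi-invariants of weight chi_theta.  So a semi-invariant f agrees with
   f(normal form(y)) wherever prod_j Delta_j does not vanish; as prod_j Delta_j
   is a nonzero polynomial, f is a polynomial in the y_j.  Evaluating at the
   normal forms shows that the y_j are algebraically independent. *)

Lemma lift_max_widen n (i : 'I_n) : lift ord_max i = widen_ord (leqnSn n) i.
Proof. by apply: val_inj; exact: lift_max. Qed.

Section PolynomialFunctions.
Context {R : idomainType}.
Hypothesis natr_inj : injective (fun n : nat => n%:R : R).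

Local Notation widen := (widen_ord (leqnSn _)).

Lemma poly_eq0_horner (p : {poly R}) : (forall x, p.[x] = 0) -> p = 0.
Proof.
move=> p0; apply/eqP; apply: contraT => pn0.
pose rs := [seq i%:R : R | i <- iota 0 (size p)].
have : (size rs < size p)%N.
  apply: max_poly_roots pn0 _ _; first by apply/allP => x /mapP [i _ ->]; exact/eqP.
  by rewrite map_inj_uniq ?iota_uniq.
by rewrite size_map size_iota ltnn.
Qed.

Lemma meval_muni n (p : {mpoly R[n.+1]}) v :
  p.@[v] = (map_poly (meval (v \o widen)) (muni p)).[v ord_max].
Proof.
rewrite mevalE muniE rmorph_sum horner_sum; apply: eq_bigr => m _.
rewrite /= map_polyZ hornerZ map_polyXn hornerXn /= mevalZ mevalX.
rewrite big_ord_recr /= mulrA; congr (_ * _ * _).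
by apply: eq_bigr => i _; rewrite mnmE.
Qed.

Lemma mcoeff_muni n (p : {mpoly R[n.+1]}) (m : 'X_{1..n.+1}) :
  ((muni p)`_(m ord_max))@_[multinom [tuple m (widen i) | i < n]] = p@_m.
Proof.
rewrite muniE coef_sum (raddf_sum (mcoeff _)) [in RHS](mpolyE p).
rewrite (raddf_sum (mcoeff _)); apply: eq_bigr => m' _ /=.
rewrite coefZ coefXn mcoeffZ mcoeffX mulr_natr mcoeffMn mcoeffZ mcoeffX.
rewrite -mulrnAr -mulrnA mulnb; congr (_ * _%:R); congr nat_of_bool.
apply/andP/eqP => [[/eqP e_widen /eqP e_max]|-> //]; apply/mnmP => i.
have [j ->|->] := unliftP ord_max i; last by rewrite e_max.
rewrite lift_max_widen.
by have := congr1 (fun mm : 'X_{1..n} => mm j) e_widen; rewrite !mnmE.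
Qed.

Lemma mpoly_eq0_meval n (p : {mpoly R[n]}) : (forall v, p.@[v] = 0) -> p = 0.
Proof.
elim: n p => [|n IHn] p p0.
  by rewrite (nvar0_mpolyC p) -(mevalC (fun _ : 'I_0 => 0) p@_0) -nvar0_mpolyC p0.
have coef_muni0 k : (muni p)`_k = 0.
  apply: IHn => w; rewrite -coef_map.
  suff -> : map_poly (meval w) (muni p) = 0 by rewrite coef0.
  apply: poly_eq0_horner => x; pose v (i : 'I_n.+1) := oapp w x (insub (val i)).
  have -> : x = v ord_max by rewrite /v insubF //= ltnn.
  rewrite -(p0 v) meval_muni; congr (_.[_]); apply: eq_map_poly => q.
  by apply: meval_eq => i; rewrite /v /= insubT //= => lt_i; congr w; exact: val_inj.
by apply/mpolyP => m; rewrite -mcoeff_muni coef_muni0 !mcoeff0.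
Qed.

End PolynomialFunctions.

Section QuiverQ2.
Variables (C : fieldType) (m : nat).
Local Notation N := (ncoord m).
Local Notation widen := (widen_ord (leqnSn _)).

Definition repmx (V1 : rep1 C m) (V2 : rep2 C m) : 'M[C]_(m.+1, m + 1) :=
  row_mx (\matrix_(j < m.+1, l < m) V1 j 0 l) (\matrix_(j < m.+1, l < 1) V2 j 0 l).

Lemma coordsE V1 V2 k : coords V1 V2 k = mxvec (repmx V1 V2) 0 k.
Proof. by []. Qed.

Lemma eq_evalRep (f : {mpoly C[N]}) (V1 W1 : rep1 C m) (V2 W2 : rep2 C m) :
  V1 =1 W1 -> V2 =1 W2 -> evalRep f V1 V2 = evalRep f W1 W2.
Proof.
move=> eV1 eV2; apply: meval_eq => k; rewrite !coordsE /repmx.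
by congr (mxvec (row_mx _ _) 0 k); apply/matrixP => a b; rewrite !mxE ?eV1 ?eV2.
Qed.

Lemma coords_surj (v : 'I_N -> C) : exists V1 V2, coords V1 V2 =1 v.
Proof.
pose M : 'M[C]_(m.+1, m + 1) := vec_mx (\row_k v k).
pose V1 j := \row_l M j (lshift 1 l); pose V2 j := \row_l M j (rshift m l).
have repmxE : repmx V1 V2 = M.
  by rewrite -[RHS]hsubmxK; congr row_mx; apply/matrixP => a b; rewrite !mxE.
by exists V1, V2 => k; rewrite coordsE repmxE vec_mxK mxE.
Qed.

Definition coordmx : 'M[{mpoly C[N]}]_(m.+1, m + 1) := \matrix_(a, b) 'X_(mxvec_index a b).

Lemma meval_coordmx V1 V2 a b : (coordmx a b).@[coords V1 V2] = repmx V1 V2 a b.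
Proof. by rewrite mxE mevalXU coordsE mxvecE. Qed.

(* The minor omitting row j is taken with row j replaced by the last row, so
   that for j < m it is an entry of Cramer's rule for the first m rows. *)
Definition compl_row (j : 'I_m.+1) (i : 'I_m) : 'I_m.+1 :=
  if val i == val j then ord_max else widen i.

Lemma compl_row_max i : compl_row ord_max i = widen i.
Proof. by rewrite /compl_row /= ltn_eqF. Qed.

Lemma compl_row_widen j i : compl_row (widen j) i = if i == j then ord_max else widen i.
Proof. by []. Qed.

Lemma widen_eq_max (i : 'I_m) : (widen i == ord_max) = false.
Proof. by rewrite -val_eqE /= ltn_eqF. Qed.

Definition minormx (V1 : rep1 C m) j : 'M[C]_m := \matrix_(i, l) V1 (compl_row j i) 0 l.
Definition minor_det V1 j := \det (minormx V1 j).
Definition genval V1 (V2 : rep2 C m) j := V2 j 0 0 * minor_det V1 j.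

Definition minor_poly j : {mpoly C[N]} :=
  \det (\matrix_(i, l) coordmx (compl_row j i) (lshift 1 l)).
Definition gen_poly j := coordmx j (rshift m ord0) * minor_poly j.
Definition gens := [tuple gen_poly j | j < m.+1].

Lemma meval_minor_poly V1 V2 j : (minor_poly j).@[coords V1 V2] = minor_det V1 j.
Proof.
rewrite -det_map_mx; congr (\det _); apply/matrixP => i l.
by rewrite !mxE /= mevalXU coordsE mxvecE row_mxEl mxE.
Qed.

Lemma meval_gens V1 V2 j : (tnth gens j).@[coords V1 V2] = genval V1 V2 j.
Proof. by rewrite tnth_mktuple mevalM meval_minor_poly meval_coordmx row_mxEr mxE. Qed.

Lemma minor_det_adj V1 (j : 'I_m) :
  minor_det V1 (widen j) = (V1 ord_max *m \adj (minormx V1 ord_max)) 0 j.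
Proof.
rewrite /minor_det (expand_det_row _ j) mxE; apply: eq_bigr => l _.
rewrite !mxE compl_row_widen eqxx; congr (_ * (_ * \det _)).
apply/matrixP => a b; rewrite !mxE compl_row_widen compl_row_max.
by rewrite eq_sym (negbTE (neq_lift j a)).
Qed.

Lemma prod_compl_row (f : 'I_m.+1 -> C) j :
  \prod_i f (compl_row j i) * f j = \prod_i f i.
Proof.
rewrite [RHS]big_ord_recr /=; have [i ->|->] := unliftP ord_max j; last first.
  by under eq_bigr do rewrite compl_row_max.
rewrite lift_max_widen (bigD1 i) // [in RHS](bigD1 i) //= compl_row_widen eqxx.
under eq_bigr => k /negbTE ne_ki do rewrite compl_row_widen ne_ki.
ring.
Qed.

Lemma mulmx11E (A B : 'M[C]_1) : (A *m B) 0 0 = A 0 0 * B 0 0.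
Proof. by rewrite mxE big_ord1. Qed.

Lemma genval_act g1 g2 h V1 V2 j :
  genval (act1 g1 h V1) (act2 g2 h V2) j = chi_theta g1 g2 h * genval V1 V2 j.
Proof.
have minor_act : minormx (act1 g1 h V1) j =
    diag_mx (\row_i h (compl_row j i) 0 0) *m minormx V1 j *m invmx g1.
  apply/matrixP => i l; rewrite mul_diag_mx !mxE; apply: eq_bigr => k _.
  by rewrite !mxE big_ord1.
rewrite /genval /minor_det minor_act !det_mulmx det_inv det_diag !mulmx11E.
have -> : invmx g2 0 0 = (\det g2)^-1 by rewrite -det_inv det_mx11.
rewrite /chi_theta; under [in RHS]eq_bigr do rewrite det_mx11.
rewrite -(prod_compl_row (fun i => h i 0 0) j).
under eq_bigr do rewrite mxE.
ring.
Qed.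

Definition std_rep1 : rep1 C m :=
  fun j => \row_l (if j == ord_max then 1 else (val j == val l)%:R).
Definition std_rep2 (y : 'I_m.+1 -> C) : rep2 C m := fun j => (y j)%:M.

Lemma minormx_std_max : minormx std_rep1 ord_max = 1%:M.
Proof. by apply/matrixP => i l; rewrite !mxE compl_row_max widen_eq_max. Qed.

Lemma minor_det_std j : minor_det std_rep1 j = 1.
Proof.
have [i ->|->] := unliftP ord_max j; last by rewrite /minor_det minormx_std_max det1.
by rewrite lift_max_widen minor_det_adj minormx_std_max adj1 mulmx1 mxE eqxx.
Qed.

Lemma genval_std y j : genval std_rep1 (std_rep2 y) j = y j.
Proof. by rewrite /genval minor_det_std mulr1 mxE eqxx mulr1n. Qed.

Definition std_coordmx : 'M[{mpoly C[m.+1]}]_(m.+1, m + 1) :=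
  row_mx (\matrix_(j < m.+1, l < m) (std_rep1 j 0 l)%:MP) (\matrix_(j < m.+1, l < 1) 'X_j).
Definition std_coords : N.-tuple {mpoly C[m.+1]} := [tuple mxvec std_coordmx 0 k | k < N].

Lemma meval_std_coords y k : (tnth std_coords k).@[y] = coords std_rep1 (std_rep2 y) k.
Proof.
rewrite tnth_mktuple coordsE.
have <- : map_mx (meval y) std_coordmx = repmx std_rep1 (std_rep2 y).
  rewrite map_row_mx; congr row_mx; apply/matrixP => a b.
    by rewrite !mxE mevalC.
  by rewrite !ord1 !mxE mevalXU eqxx mulr1n.
by rewrite -map_mxvec mxE.
Qed.

Section Normalization.
Variable V1 : rep1 C m.
Hypothesis minor_det_neq0 : forall j, minor_det V1 j != 0.

(* In the basis formed by the first m rows of V1, rescaled by the minors,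
   row j < m has coordinates e_j / Delta_j and, by Cramer's rule, the last
   row has coordinates (1, ..., 1) / Delta_m; h clears the denominators. *)
Let g1 := diag_mx (\row_i minor_det V1 (widen i)) *m minormx V1 ord_max.
Let h j : 'M[C]_1 := (minor_det V1 j)%:M.

Lemma det_normalizer : \det g1 = \prod_j minor_det V1 j.
Proof.
rewrite det_mulmx det_diag [RHS]big_ord_recr /=; congr (_ * _).
by apply: eq_bigr => i _; rewrite mxE.
Qed.

Lemma normalizer_inGL : inGL g1 1%:M h.
Proof.
split=> [||j]; rewrite ?unitmx1 // unitmxE unitfE ?det_scalar1 //.
by rewrite det_normalizer; apply/prodf_neq0 => j _.
Qed.

Lemma chi_normalizer : chi_theta g1 1%:M h = 1.
Proof.
rewrite /chi_theta det_normalizer det1 invr1 mulr1.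
under [X in _ * X]eq_bigr do rewrite /h det_scalar1.
by rewrite mulVf //; apply/prodf_neq0 => j _.
Qed.

Lemma act1_normalizer : act1 g1 h V1 =1 std_rep1.
Proof.
move=> j; have [g1_unit _ _] := normalizer_inGL.
rewrite /act1; apply: canLR (mulmxK g1_unit) _.
rewrite mul_scalar_mx /g1 mulmxA; have [i ->|->] := unliftP ord_max j.
  rewrite lift_max_widen.
  have -> : std_rep1 (widen i) *m diag_mx (\row_i minor_det V1 (widen i)) =
            minor_det V1 (widen i) *: delta_mx 0 i.
    apply/rowP => l; rewrite mul_mx_diag !mxE widen_eq_max eqxx.
    have [->|ne_li] := eqVneq l i; first by rewrite !eqxx mulr1 mul1r.
    have/negbTE -> : val (widen i) != val l.
      by apply: contra ne_li => /eqP e; apply/eqP/val_inj; exact: esym e.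
    by rewrite mul0r mulr0.
  rewrite -scalemxAl -rowE; congr (_ *: _).
  by apply/rowP => l; rewrite !mxE compl_row_max.
have -> : std_rep1 ord_max *m diag_mx (\row_i minor_det V1 (widen i)) =
          V1 ord_max *m \adj (minormx V1 ord_max).
  by apply/rowP => l; rewrite mul_mx_diag !mxE eqxx mul1r minor_det_adj mxE.
by rewrite -mulmxA mul_adj_mx mul_mx_scalar.
Qed.

Lemma act2_normalizer V2 : act2 1%:M h V2 =1 std_rep2 (genval V1 V2).
Proof.
move=> j; rewrite /act2 invmx1 mulmx1 mul_scalar_mx; apply/matrixP => a b.
by rewrite !ord1 !mxE eqxx mulr1n mulrC.
Qed.

Lemma semi_invariant_std k f V2 : semi_invariant k f ->
  evalRep f V1 V2 = evalRep f std_rep1 (std_rep2 (genval V1 V2)).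
Proof.
move=> /(_ _ _ _ normalizer_inGL V1 V2); rewrite chi_normalizer expr1n mul1r => <-.
exact: eq_evalRep (act1_normalizer) (act2_normalizer V2).
Qed.

End Normalization.

Lemma gens_semi_invariant j : semi_invariant 1 (tnth gens j).
Proof. by move=> g1 g2 h _ V1 V2; rewrite /evalRep !meval_gens genval_act expr1. Qed.

Lemma prod_minor_poly_neq0 : \prod_j minor_poly j != 0.
Proof.
apply/eqP => /(congr1 (meval (coords std_rep1 (std_rep2 (fun _ => 0))))).
rewrite meval0 rmorph_prod /=; under eq_bigr do rewrite meval_minor_poly minor_det_std.
by rewrite big1_eq; apply/eqP; rewrite oner_eq0.
Qed.

Lemma meval_comp_gens_std V1 V2 k (f : {mpoly C[N]}) : semi_invariant k f ->
  (forall j, minor_det V1 j != 0) ->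
  (comp_mpoly gens (comp_mpoly std_coords f)).@[coords V1 V2] = f.@[coords V1 V2].
Proof.
move=> f_semi minor_neq0; have := semi_invariant_std V1 minor_neq0 k f V2 f_semi.
rewrite /evalRep !comp_mpoly_meval => ->; apply: meval_eq => l.
by rewrite -meval_std_coords; apply: meval_eq => j; exact: meval_gens.
Qed.

Section CharacteristicZero.
Hypothesis natr_inj : injective (fun n : nat => n%:R : C).

Lemma gens_alg_indep (p : {mpoly C[m.+1]}) : comp_mpoly gens p = 0 -> p = 0.
Proof.
move=> p_gens0; apply: (mpoly_eq0_meval natr_inj) => y.
have := congr1 (meval (coords std_rep1 (std_rep2 y))) p_gens0.
rewrite comp_mpoly_meval meval0 => <-.
by apply: meval_eq => j; rewrite meval_gens genval_std.
Qed.

Lemma semi_invariant_comp_gens k f : semi_invariant k f ->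
  f = comp_mpoly gens (comp_mpoly std_coords f).
Proof.
move=> f_semi.
suff /eqP : (f - comp_mpoly gens (comp_mpoly std_coords f)) * \prod_j minor_poly j = 0.
  by rewrite mulf_eq0 (negbTE prod_minor_poly_neq0) orbF subr_eq0 => /eqP.
apply: (mpoly_eq0_meval natr_inj) => v.
have [V1 [V2 /meval_eq <-]] := coords_surj v.
rewrite mevalM mevalB rmorph_prod /=; under eq_bigr do rewrite meval_minor_poly.
have [minor_neq0|] := boolP [forall j, minor_det V1 j != 0].
  by rewrite (meval_comp_gens_std V1 V2 k f f_semi) ?subrr ?mul0r //; apply/forallP.
by move=> /forallPn [j /negPn/eqP minor0]; rewrite (bigD1 j) //= minor0 mul0r mulr0.
Qed.

End CharacteristicZero.

End QuiverQ2.

Theorem mainTheorem7 (R : realType) (m : nat) (hm : (1 <= m)%N) :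
  exists F : (m.+1).-tuple {mpoly R[i][ncoord m]},
    [/\ (forall j : 'I_m.+1, semi_invariant 1 (tnth F j)),
        (forall p : {mpoly R[i][m.+1]}, comp_mpoly F p = 0 -> p = 0) &
        (forall (k : nat) (f : {mpoly R[i][ncoord m]}),
           semi_invariant k f -> exists p : {mpoly R[i][m.+1]}, f = comp_mpoly F p)].
Proof.
have natr_inj : injective (fun n : nat => n%:R : R[i]).
  by move=> a b /eqP; rewrite Num.Theory.eqr_nat => /eqP.
exists (gens R[i] m); split.
- exact: gens_semi_invariant.
- exact: gens_alg_indep.
- by move=> k f f_semi; eexists; exact: semi_invariant_comp_gens f_semi.
Qed.
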